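(* Let $p$ and $q$ be probability distributions on a countable set $\mathcal{A}$ with $\mathrm{dist}(p,q)\le\epsilon$. Let $N\ge1$ be an integer and let $p^N,q^N$ be the product distributions on $\mathcal{A}^N$ (i.i.d. sampling from $p$, resp. $q$). For any $R_N\subset\mathcal{A}^N$ and $\alpha>0$, if $p^N(R_N)\ge1-\alpha$, then \[q^N(R_N)\ge 1-\alpha-2N^3\sqrt{4\epsilon\ln 2}-\frac1N.\]
   Context: $D(p\|q)=\sum_y p(y)\log_2\frac{p(y)}{q(y)}$ and $\mathrm{dist}(p,q):=D(p\|\frac{p+q}{2})+D(q\|\frac{p+q}{2})$. *)

From HB Require Import structures.
From mathcomp Require Import all_boot all_order all_algebra.
From mathcomp Require Import all_classical all_reals all_analysis.
Set Implicit Arguments. Unset Strict Implicit. Unset Printing Implicit Defensive.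
Import Order.TTheory GRing.Theory Num.Theory.
Local Open Scope classical_set_scope.
Local Open Scope ring_scope.

Definition is_distr (R : realType) (A : countType) (p : A -> R) : Prop :=
  (forall a, 0 <= p a) /\ (\esum_(a in [set: A]) (p a)%:E = 1)%E.

(* Sum of a real family over a countable type: positive part minus
   negative part (the standard unordered sum; equals the usual sum when
   the family is absolutely summable). *)
Definition rsum (R : realType) (A : countType) (f : A -> R) : \bar R :=
  (\esum_(a in [set: A]) ((EFin \o f)^\+ a) - \esum_(a in [set: A]) ((EFin \o f)^\- a))%E.

Definition log2 (R : realType) (x : R) : R := ln x / ln 2.

(* Relative entropy D(p||q) = sum_y p(y) log2 (p(y)/q(y)); terms with p(y)=0
   contribute 0 (since 0 * _ = 0). *)
Definition KL (R : realType) (A : countType) (p q : A -> R) : \bar R :=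
  rsum (fun y => p y * log2 (p y / q y)).

Definition mix (R : realType) (A : countType) (p q : A -> R) : A -> R :=
  fun y => (p y + q y) / 2.

Definition distJS (R : realType) (A : countType) (p q : A -> R) : \bar R :=
  (KL p (mix p q) + KL q (mix p q))%E.

Definition prodN (R : realType) (A : countType) (N : nat) (p : A -> R)
    (S : set (N.-tuple A)) : \bar R :=
  \esum_(x in S) (\prod_(i < N) p (tnth x i))%:E.

(* Pointwise, the Jensen-Shannon terms of (x, y) dominate the squared Hellinger
   distance of (x, y) to their mean m, which controls (x - y)^2; by AM-GM this gives
   |x - y| <= t (x + y) / 2 + (4 / t) (x ln (x / m) + y ln (y / m)) for every t > 0.
   Summing over the alphabet and optimising in t yields the Pinsker-type bound
   sum_a |p a - q a| <= 2 sqrt (4 eps ln 2).  A telescoping (hybrid) argument bounds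
   the total variation between p^N and q^N by N times that between p and q, hence
   p^N(R_N) <= q^N(R_N) + 2 N sqrt (4 eps ln 2), which is stronger than the claim. *)

From HB Require Import structures.
From mathcomp Require Import all_boot all_order all_algebra.
From mathcomp Require Import all_classical all_reals all_analysis.
From mathcomp Require Import ring lra.
Set Implicit Arguments. Unset Strict Implicit. Unset Printing Implicit Defensive.
Import Order.TTheory GRing.Theory Num.Theory.
Local Open Scope classical_set_scope.
Local Open Scope ring_scope.

Section rcf_inequalities.
Variable R : rcfType.

Lemma maxr0_subN (r : R) : Num.max r 0 - Num.max (- r) 0 = r.
Proof.
rewrite !maxEle oppr_le0.
by case: ifPn => r0; case: ifPn => r1; rewrite -?ltNge in r0 r1; lra.
Qed.

Lemma sqr_le_amgm (a b c t : R) : 0 <= b -> 0 <= c -> 0 < t ->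
  a ^+ 2 <= 4 * b * c -> a <= t * b + c / t.
Proof.
move=> b0 c0 t0 habc.
have -> : c / t = (c / t ^+ 2) * t by field; rewrite gt_eqF.
set d := c / t ^+ 2.
have d0 : 0 <= d by rewrite divr_ge0 ?sqr_ge0.
have hc : c = d * t ^+ 2 by rewrite /d mulfVK // sqrf_eq0 gt_eqF.
rewrite hc in habc.
have s0 : 0 <= t * b + d * t by have := ltW t0; nra.
have : a ^+ 2 <= (t * b + d * t) ^+ 2.
  by have := mulr_ge0 (sqr_ge0 (b - d)) (sqr_ge0 t); nra.
nra.
Qed.

Lemma sqr_subXX_le (P Q M : R) : 0 <= P -> 0 <= Q -> 0 <= M ->
  2 * M ^+ 2 = P ^+ 2 + Q ^+ 2 ->
  (P ^+ 2 - Q ^+ 2) ^+ 2 <= 16 * (P ^+ 2 + Q ^+ 2) * (P ^+ 2 + Q ^+ 2 - M * (P + Q)).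
Proof.
move=> P0 Q0 M0 hM.
set S := P + Q.
have S0 : 0 <= S by rewrite addr_ge0.
have S2M : S <= 2 * M.
  have : S ^+ 2 <= (2 * M) ^+ 2 by have := sqr_ge0 (P - Q); rewrite /S; nra.
  nra.
have -> : (P ^+ 2 - Q ^+ 2) ^+ 2 = S ^+ 2 * ((2 * M - S) * (2 * M + S)).
  have -> : (2 * M - S) * (2 * M + S) = 2 * (2 * M ^+ 2) - S ^+ 2 by ring.
  by rewrite hM /S; ring.
have -> : 16 * (P ^+ 2 + Q ^+ 2) * (P ^+ 2 + Q ^+ 2 - M * S) = 32 * M ^+ 3 * (2 * M - S)
  by rewrite -hM; ring.
have : S ^+ 2 * (2 * M + S) <= 32 * M ^+ 3.
  have : S ^+ 2 <= 4 * M ^+ 2 by nra.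
  have : 0 <= M ^+ 3 by rewrite exprn_ge0.
  nra.
nra.
Qed.

Lemma le_2sqrt_of_le_add_div (d k : R) : (forall t, 0 < t -> d <= t + k / t) ->
  d <= 2 * Num.sqrt k.
Proof.
move=> hd; have [k0|kp] := lerP k 0.
  rewrite (_ : Num.sqrt k = 0); last by apply/eqP; rewrite sqrtr_eq0.
  rewrite mulr0 leNgt; apply/negP => d0.
  have := hd (d / 2) (divr_gt0 d0 (ltr0Sn _ 1)).
  have : k / (d / 2) <= 0 by rewrite pmulr_lle0 ?invr_gt0 ?divr_gt0.
  lra.
have sk : 0 < Num.sqrt k by rewrite sqrtr_gt0.
have := hd _ sk.
by rewrite -{2}(sqr_sqrtr (ltW kp)) expr2 mulfK ?gt_eqF // -mulr2n mulr_natl.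
Qed.
End rcf_inequalities.

Section real_inequalities.
Variable R : realType.
Implicit Types x y t : R.

Lemma ln_ge1_subV y : 0 < y -> 1 - y^-1 <= ln y.
Proof.
move=> y0; have : -1 < y^-1 - 1 by rewrite ltrBrDr addNr invr_gt0.
move/le_ln1Dx; rewrite (addrC 1) subrK lnV ?posrE //.
by rewrite lerNl opprB.
Qed.

Lemma mul_ln_div_ge x m : 0 <= x -> 0 < m ->
  2 * (x - Num.sqrt x * Num.sqrt m) <= x * ln (x / m).
Proof.
move=> x0 m0; have [->|xn0] := eqVneq x 0; first by rewrite sqrtr0 !mul0r subrr mulr0.
have xp : 0 < x by rewrite lt_def xn0.
have [sx sm] : 0 < Num.sqrt x /\ 0 < Num.sqrt m by rewrite !sqrtr_gt0.
have -> : x / m = (Num.sqrt x / Num.sqrt m) ^+ 2.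
  by rewrite expr_div_n !sqr_sqrtr // ltW.
rewrite lnXn ?divr_gt0 //.
have := ln_ge1_subV (divr_gt0 sx sm); rewrite invf_div => H.
have e : x / Num.sqrt x = Num.sqrt x.
  by rewrite -{1}(sqr_sqrtr x0) expr2 mulfK ?gt_eqF.
have : x * (1 - Num.sqrt m / Num.sqrt x) = x - Num.sqrt x * Num.sqrt m.
  by rewrite mulrBr mulr1 mulrCA e mulrC.
have := ler_wpM2l (ltW xp) H.
nra.
Qed.

Lemma normrB_le_ln_mix x y t : 0 <= x -> 0 <= y -> 0 < t ->
  `|x - y| <= t * ((x + y) / 2) +
    4 / t * (x * ln (x / ((x + y) / 2)) + y * ln (y / ((x + y) / 2))).
Proof.
move=> x0 y0 t0.
have [xy0|xyn0] := eqVneq (x + y) 0.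
  have [-> ->] : x = 0 /\ y = 0 by split; lra.
  by rewrite subrr normr0 !mul0r !(addr0, mulr0, mul0r).
have mp : 0 < (x + y) / 2 by rewrite divr_gt0 // lt_def xyn0 addr_ge0.
set m := (x + y) / 2 in mp *.
have lnx := mul_ln_div_ge x0 mp; have lny := mul_ln_div_ge y0 mp.
set P := Num.sqrt x in lnx *; set Q := Num.sqrt y in lny *.
set M := Num.sqrt m in lnx lny *.
(* 2 H is the squared Hellinger distance between (x, y) and (m, m). *)
set H := x + y - M * (P + Q).
have hH : (x - y) ^+ 2 <= 16 * (x + y) * H.
  have ex : x = P ^+ 2 by rewrite sqr_sqrtr.
  have ey : y = Q ^+ 2 by rewrite sqr_sqrtr.
  have em : m = M ^+ 2 by rewrite sqr_sqrtr // ltW.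
  rewrite /H ex ey; apply: sqr_subXX_le; rewrite ?sqrtr_ge0 //.
  by rewrite -ex -ey -em /m; field.
have H0 : 0 <= H.
  have : 0 < x + y by rewrite lt_def xyn0 addr_ge0.
  have := sqr_ge0 (x - y); nra.
apply: le_trans (_ : _ <= t * ((x + y) / 2) + 8 * H / t) _.
  apply: sqr_le_amgm; rewrite ?divr_ge0 ?addr_ge0 ?mulr_ge0 // real_normK ?num_real //.
  by rewrite (_ : 4 * _ * _ = 16 * (x + y) * H) //; field.
rewrite lerD2l (_ : 8 * H / t = 4 / t * (2 * H)); last by ring.
apply: ler_wpM2l; first by rewrite divr_ge0 // ltW.
have -> : 2 * H = 2 * (x - P * M) + 2 * (y - Q * M) by rewrite /H; ring.
exact: lerD.
Qed.

Lemma ln2_gt0 : 0 < ln (2 : R).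
Proof. by rewrite ln_gt0 // ltr1n. Qed.

Lemma mul_log2_div_ge x m : 0 <= x -> 0 <= m -> (m = 0 -> x = 0) ->
  - (m / ln 2) <= x * log2 (x / m).
Proof.
move=> x0 m0 mx; have [->|xn0] := eqVneq x 0.
  by rewrite mul0r oppr_le0 divr_ge0 // ltW // ln2_gt0.
have xp : 0 < x by rewrite lt_def xn0.
have mp : 0 < m by rewrite lt_def m0 andbT; apply/eqP => /mx/eqP; rewrite (negbTE xn0).
have : - m <= x * ln (x / m).
  have := ler_wpM2l (ltW xp) (ln_ge1_subV (divr_gt0 xp mp)).
  rewrite invf_div mulrBr mulr1 mulrCA divff ?gt_eqF // mulr1; lra.
by rewrite /log2 mulrA -mulNr ler_pM2r // invr_gt0 ln2_gt0.
Qed.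
End real_inequalities.

Section hybrid.
Variable R : numDomainType.

(* The factors of the i-th term of the telescoping expansion
   prod a - prod b = sum_i b_0 ... b_(i-1) (a_i - b_i) a_(i+1) ... a_(n-1),
   with a_i - b_i replaced by its absolute value. *)
Definition hybrid n (a b : 'I_n -> R) (i j : 'I_n) : R :=
  if (j < i)%N then b j else if j == i then `|a j - b j| else a j.

Lemma normr_prodB_le_sum_hybrid n (a b : 'I_n -> R) :
  (forall i, 0 <= a i) -> (forall i, 0 <= b i) ->
  `|\prod_(i < n) a i - \prod_(i < n) b i| <= \sum_(i < n) \prod_(j < n) hybrid a b i j.
Proof.
elim: n a b => [|n IH] a b a0 b0; first by rewrite !big_ord0 subrr normr0.
rewrite !big_ord_recr /=.
set A := \prod_(i < n) a _; set B := \prod_(i < n) b _.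
have B0 : 0 <= B by rewrite prodr_ge0.
have -> : A * a ord_max - B * b ord_max =
          (A - B) * a ord_max + B * (a ord_max - b ord_max) by ring.
apply: le_trans (ler_normD _ _) _.
rewrite !normrM (ger0_norm (a0 _)) (ger0_norm B0).
apply: lerD.
  apply: le_trans (ler_wpM2r (a0 _) (IH _ _ (fun=> a0 _) (fun=> b0 _))) _.
  rewrite mulr_suml; apply: ler_sum => i _; rewrite big_ord_recr /=.
  rewrite [hybrid _ _ _ ord_max]/hybrid ltnNge (ltnW (ltn_ord i)) /=.
  by rewrite -val_eqE /= gtn_eqF // ler_wpM2r.
rewrite [hybrid _ _ _ ord_max]/hybrid ltnn eqxx.
rewrite [X in _ <= X * _](_ : _ = B) //; apply: eq_bigr => j _.
by rewrite /hybrid /= ltn_ord.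
Qed.
End hybrid.

Section esum_scale.
Local Open Scope ereal_scope.
Variables (R : realType) (T : choiceType).
Implicit Types (S : set T) (f : T -> \bar R).

Lemma esumZl_le S f (c : \bar R) : 0 <= c -> (forall i, S i -> 0 <= f i) ->
  \esum_(i in S) (c * f i) <= c * \esum_(i in S) f i.
Proof.
move=> c0 f0; apply: ge_ereal_sup => _ [X [finX XS] <-] /=.
rewrite fsbig_finite// big_seq -ge0_sume_distrr; last first.
  by move=> i; rewrite in_fset_set// inE => /XS/f0.
rewrite -big_seq -fsbig_finite//.
by apply: lee_wpmul2l => //; apply: ereal_sup_ubound; exists X.
Qed.

Lemma esumZl S f (c : R) : (0 <= c)%R -> (forall i, S i -> 0 <= f i) ->
  \esum_(i in S) (c%:E * f i) = c%:E * \esum_(i in S) f i.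
Proof.
move=> c0 f0; apply/eqP; rewrite eq_le esumZl_le ?lee_fin//=.
have [->|cn0] := eqVneq c 0%R; first by rewrite mul0e esum_ge0// => i _; rewrite mul0e.
have cp : (0 < c)%R by rewrite lt_def cn0.
have -> : \esum_(i in S) f i = \esum_(i in S) (c^-1%:E * (c%:E * f i)).
  by apply: eq_esum => i _; rewrite muleA -EFinM mulVf ?mul1e.
have cf0 i : S i -> 0 <= c%:E * f i by move=> Si; rewrite mule_ge0 ?f0 ?lee_fin.
have c0E : 0 <= c%:E by rewrite lee_fin.
have := lee_wpmul2l c0E (@esumZl_le S _ (c^-1)%:E _ cf0).
by rewrite muleA -EFinM divff ?mul1e ?lee_fin ?invr_ge0 ?gt_eqF//; apply.
Qed.
End esum_scale.

Lemma esum_tuple_prod_le (R : realType) (A : choiceType) n (f : 'I_n -> A -> R) :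
  (forall i a, 0 <= f i a) ->
  (\esum_(x in [set: n.-tuple A]) (\prod_(i < n) f i (tnth x i))%:E <=
   \prod_(i < n) \esum_(a in [set: A]) (f i a)%:E)%E.
Proof.
elim: n f => [|n IH] f f0.
  rewrite big_ord0 (_ : [set: 0.-tuple A] = [set [tuple]]).
    by rewrite esum_set1 big_ord0.
  by apply/seteqP; split => x //= _; rewrite (tuple0 x).
pose cons_tuple (z : A * n.-tuple A) := [tuple of z.1 :: z.2].
rewrite (reindex_esum [set: A * n.-tuple A] _ cons_tuple); last first.
  split=> //.
  - by move=> [a x] [b y] _ _ /(congr1 val) /= [-> /val_inj ->].
  - move=> y _; exists (thead y, [tuple of behead y]) => //.
    by rewrite /cons_tuple /= -tuple_eta.
rewrite (_ : [set: A * n.-tuple A] = [set: A] `*`` fun=> [set: n.-tuple A]);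
  last by apply/seteqP; split.
rewrite -(esum_esum (a := fun a x => (\prod_(i < n.+1) f i (tnth (cons_tuple (a, x)) i))%:E));
  last by move=> *; rewrite lee_fin prodr_ge0.
rewrite big_ord_recl.
have tail_ge0 x : (0 <= (\prod_(i < n) f (lift ord0 i) (tnth x i))%:E)%E.
  by rewrite lee_fin prodr_ge0.
apply: (@le_trans _ _ (\esum_(a in [set: A]) ((f ord0 a)%:E *
   \esum_(x in [set: n.-tuple A]) (\prod_(i < n) f (lift ord0 i) (tnth x i))%:E))%E).
  apply: le_esum => a _; rewrite -esumZl ?lee_fin//.
  rewrite le_eqVlt; apply/orP; left; apply/eqP/eq_esum => x _.
  rewrite big_ord_recl EFinM; congr (_%:E * _%:E)%E.
  by apply: eq_bigr => i _; rewrite !(tnth_nth a).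
under eq_esum do rewrite muleC.
apply: le_trans (esumZl_le _ _) _.
- by apply: esum_ge0 => x _; exact: tail_ge0.
- by move=> a _; rewrite lee_fin.
rewrite muleC; apply: lee_wpmul2l; first by apply: esum_ge0 => a _; rewrite lee_fin.
exact: IH.
Qed.

Section product_distribution.
Local Open Scope ereal_scope.
Variables (R : realType) (A : countType) (p q : A -> R).
Hypotheses (hp : is_distr p) (hq : is_distr q).

Lemma esum_tuple_prodB_le n :
  \esum_(x in [set: n.-tuple A])
     `|\prod_(i < n) p (tnth x i) - \prod_(i < n) q (tnth x i)|%:E <=
  (\esum_(a in [set: A]) `|p a - q a|%:E) *+ n.
Proof.
have [p0 p1] := hp; have [q0 q1] := hq.
pose g (i j : 'I_n) a := hybrid (fun=> p a) (fun=> q a) i j.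
have g0 i j a : (0 <= g i j a)%R by rewrite /g /hybrid; case: ifP => // _; case: ifP.
apply: le_trans (_ : _ <= \esum_(x in [set: n.-tuple A])
    \sum_(i < n) (\prod_(j < n) g i j (tnth x j))%:E) _.
  apply: le_esum => x _; rewrite sumEFin lee_fin.
  exact: normr_prodB_le_sum_hybrid.
rewrite esum_sum; last by move=> x i _ _; rewrite lee_fin prodr_ge0.
set T := \esum_(a in [set: A]) _.
apply: le_trans (_ : _ <= \sum_(i < n) T) _; last by rewrite sumr_const card_ord.
apply: lee_sum => i _.
apply: (le_trans (esum_tuple_prod_le (g0 i))).
rewrite (bigD1 i) //= big1 ?mule1.
  by under eq_esum do rewrite /g /hybrid ltnn eqxx.
move=> j ji; under eq_esum do rewrite /g /hybrid (negbTE ji).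
by case: (j < i)%N.
Qed.

Lemma prodN_le_add n (S : set (n.-tuple A)) :
  prodN p S <= prodN q S + (\esum_(a in [set: A]) `|p a - q a|%:E) *+ n.
Proof.
have [p0 _] := hp; have [q0 _] := hq.
set P := fun x : n.-tuple A => (\prod_(i < n) p (tnth x i))%R.
set Q := fun x : n.-tuple A => (\prod_(i < n) q (tnth x i))%R.
apply: le_trans (_ : _ <= \esum_(x in S) ((Q x)%:E + `|P x - Q x|%:E)) _.
  apply: le_esum => x _; rewrite -EFinD lee_fin -lerBlDl.
  exact: ler_norm.
rewrite esumD; last 2 first.
- by move=> x _; rewrite lee_fin prodr_ge0.
- by move=> x _; rewrite lee_fin.
apply: leeD => //; apply: le_trans (esum_tuple_prodB_le n).
rewrite [leLHS]esum_mkcond; apply: le_esum => x _.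
by case: ifP.
Qed.
End product_distribution.

Section rsum.
Local Open Scope ereal_scope.
Variables (R : realType) (A : countType).
Implicit Types f g h : A -> R.

Lemma EFin_compZl (c : R) g : EFin \o (fun a => c * g a)%R = fun a => c%:E * (EFin \o g) a.
Proof. by apply/funext => a; rewrite /= EFinM. Qed.

Lemma funeneg_EFinZl_lt (c : R) g : (0 <= c)%R ->
  \esum_(a in [set: A]) (EFin \o g)^\- a < +oo ->
  \esum_(a in [set: A]) (EFin \o (fun a => c * g a)%R)^\- a < +oo.
Proof.
move=> c0 Nfin; rewrite EFin_compZl ge0_funenegM // esumZl //.
have N0 : 0 <= \esum_(a in [set: A]) (EFin \o g)^\- a.
  by apply: esum_ge0 => a _; exact: funeneg_ge0.
by rewrite -ge0_fin_numE ?mule_ge0 ?lee_fin // fin_numM // ge0_fin_numE.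
Qed.

Lemma rsum_gtNy g : \esum_(a in [set: A]) (EFin \o g)^\- a < +oo -> -oo < rsum g.
Proof.
move=> Nfin; rewrite /rsum.
apply: (@lt_le_trans _ _ (0 - \esum_(a in [set: A]) (EFin \o g)^\- a)).
  by rewrite sub0e lteNr.
by apply: leeD2r; apply: esum_ge0 => a _; exact: funepos_ge0.
Qed.

Lemma rsumZl (c : R) f : (0 <= c)%R -> rsum (fun a => c * f a)%R = c%:E * rsum f.
Proof.
move=> c0; rewrite /rsum EFin_compZl ge0_funeposM // ge0_funenegM // !esumZl //.
set X := esum _ _; set Y := esum _ _.
have Y0 : 0 <= Y by apply: esum_ge0 => a _; exact: funeneg_ge0.
have [->|cn0] := eqVneq c 0%R; first by rewrite !mul0e subee.
have cp : (0 < c)%R by rewrite lt_def cn0.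
have [Yfin|] := boolP (Y \is a fin_num).
  by rewrite muleBr // fin_num_adde_defl // fin_numN.
rewrite ge0_fin_numE // -leNgt leye_eq => /eqP ->.
by rewrite gt0_muley ?lte_fin // !addeNy gt0_muleNy ?lte_fin.
Qed.

Lemma esum_le_add_rsum2 f h g1 g2 :
  (forall a, 0 <= f a)%R -> (forall a, 0 <= h a)%R ->
  (forall a, f a <= h a + g1 a + g2 a)%R ->
  \esum_(a in [set: A]) (EFin \o g1)^\- a < +oo ->
  \esum_(a in [set: A]) (EFin \o g2)^\- a < +oo ->
  \esum_(a in [set: A]) (f a)%:E <= \esum_(a in [set: A]) (h a)%:E + rsum g1 + rsum g2.
Proof.
move=> f0 h0 fhg G1fin G2fin.
have gpE g a : (EFin \o g)^\+ a = (Num.max (g a) 0)%:E by rewrite funeposE EFin_max.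
have gnE g a : (EFin \o g)^\- a = (Num.max (- g a) 0)%:E by rewrite funenegE EFin_max.
(* Only the negative parts are moved across, so they alone need to be finite. *)
have key : \esum_(a in [set: A]) ((f a)%:E + (EFin \o g1)^\- a + (EFin \o g2)^\- a) <=
           \esum_(a in [set: A]) ((h a)%:E + (EFin \o g1)^\+ a + (EFin \o g2)^\+ a).
  apply: le_esum => a _; rewrite !gpE !gnE -!EFinD lee_fin.
  by have := fhg a; have := maxr0_subN (g1 a); have := maxr0_subN (g2 a); lra.
rewrite !esumD //= in key;
  try by move=> a _; rewrite ?adde_ge0 ?lee_fin // ?funepos_ge0 ?funeneg_ge0.
have [G1n0 G2n0] : (0 <= \esum_(a in [set: A]) (EFin \o g1)^\- a) /\
                   (0 <= \esum_(a in [set: A]) (EFin \o g2)^\- a).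
  by split; apply: esum_ge0 => a _; exact: funeneg_ge0.
rewrite -ge0_fin_numE // in G1fin; rewrite -ge0_fin_numE // in G2fin.
rewrite /rsum.
set F := esum _ _; set H := esum _ _.
set P1 := esum _ (EFin \o g1)^\+; set N1 := esum _ (EFin \o g1)^\-.
set P2 := esum _ (EFin \o g2)^\+; set N2 := esum _ (EFin \o g2)^\-.
have -> : H + (P1 - N1) + (P2 - N2) = H + P1 + P2 - (N1 + N2).
  by rewrite fin_num_oppeD // !addeA (addeAC (H + P1) (- N1)).
by rewrite leeBrDr ?fin_numD ?G1fin // addeA.
Qed.
End rsum.

Section jensen_shannon.
Local Open Scope ereal_scope.
Variables (R : realType) (A : countType).

Lemma esum_KL_funeneg_lt (p m : A -> R) : is_distr p -> is_distr m ->
  (forall a, m a = 0%R -> p a = 0%R) ->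
  \esum_(a in [set: A]) (EFin \o (fun a => p a * log2 (p a / m a))%R)^\- a < +oo.
Proof.
move=> [p0 _] [m0 m1] mp.
apply: (@le_lt_trans _ _ (\esum_(a in [set: A]) ((ln 2)^-1%:E * (m a)%:E))).
  apply: le_esum => a _; rewrite funenegE /= -EFin_max -EFinM lee_fin ge_max.
  have l2 := ln2_gt0 R.
  rewrite mulr_ge0 ?invr_ge0 ?(ltW l2) // andbT lerNl mulrC.
  exact: mul_log2_div_ge (p0 a) (m0 a) (mp a).
rewrite (@esumZl _ _ _ (fun a => (m a)%:E)) ?m1 ?mule1 ?ltry // ?invr_ge0 ?ltW ?ln2_gt0 //.
by move=> a _; rewrite lee_fin.
Qed.

Variables (p q : A -> R).
Hypotheses (hp : is_distr p) (hq : is_distr q).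

Lemma is_distr_mix : is_distr (mix p q).
Proof.
have [p0 p1] := hp; have [q0 q1] := hq; split=> [a|].
  by rewrite /mix divr_ge0 ?addr_ge0.
rewrite /mix; under eq_esum do rewrite mulrC EFinM.
rewrite esumZl ?invr_ge0 //; last by move=> a _; rewrite lee_fin addr_ge0.
under eq_esum do rewrite EFinD.
by rewrite esumD ?p1 ?q1 // => [|a _|a _]; rewrite ?lee_fin // -EFinD -EFinM mulVf.
Qed.

Lemma esum_absB_le_JS t : (0 < t)%R ->
  \esum_(a in [set: A]) `|p a - q a|%:E <= t%:E + (4 * ln 2 / t)%:E * distJS p q.
Proof.
move=> t0; have [p0 _] := hp; have [q0 _] := hq; have [m0 m1] := is_distr_mix.
have l2 := ln2_gt0 R.
set c := (4 * ln 2 / t)%R.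
have c0 : (0 <= c)%R by rewrite divr_ge0 ?mulr_ge0 // ltW.
have mp a : mix p q a = 0%R -> p a = 0%R by rewrite /mix; have := p0 a; have := q0 a; lra.
have mq a : mix p q a = 0%R -> q a = 0%R by rewrite /mix; have := p0 a; have := q0 a; lra.
set u := fun a => (p a * log2 (p a / mix p q a))%R.
set v := fun a => (q a * log2 (q a / mix p q a))%R.
have pointwise a : (`|p a - q a| <= t * mix p q a + c * u a + c * v a)%R.
  apply: (le_trans (normrB_le_ln_mix (p0 a) (q0 a) t0)).
  rewrite -addrA /u /v /c /log2 /mix le_eqVlt; apply/orP; left; apply/eqP.
  by congr (_ + _)%R; field; rewrite !gt_eqF.
have h0 a : (0 <= t * mix p q a)%R by rewrite mulr_ge0 // ltW.
have u_neg := funeneg_EFinZl_lt c0 (esum_KL_funeneg_lt hp is_distr_mix mp).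
have v_neg := funeneg_EFinZl_lt c0 (esum_KL_funeneg_lt hq is_distr_mix mq).
apply: le_trans (esum_le_add_rsum2 (fun a => normr_ge0 _) h0 pointwise u_neg v_neg) _.
have esum_h : \esum_(a in [set: A]) (t * mix p q a)%:E = t%:E.
  under eq_esum do rewrite EFinM.
  by rewrite esumZl ?m1 ?mule1 ?ltW // => a _; rewrite lee_fin.
rewrite !rsumZl // esum_h -addeA -muleDr //.
by apply: ltninfty_adde_def; rewrite inE rsum_gtNy // esum_KL_funeneg_lt.
Qed.

Lemma esum_absB_le_sqrt_JS eps : distJS p q <= eps%:E ->
  \esum_(a in [set: A]) `|p a - q a|%:E <= (2 * Num.sqrt (4 * eps * ln 2))%:E.
Proof.
move=> hd; set d := \esum_(a in [set: A]) _.
have hdt t : (0 < t)%R -> d <= (t + 4 * eps * ln 2 / t)%:E.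
  move=> t0; apply: le_trans (esum_absB_le_JS t0) _.
  rewrite EFinD; apply: leeD2l; apply: le_trans (lee_wpmul2l _ hd) _.
    by rewrite lee_fin divr_ge0 ?mulr_ge0 ?ltW ?ln2_gt0.
  by rewrite -EFinM lee_fin mulrAC (mulrAC 4%R).
have d0 : 0 <= d by apply: esum_ge0 => a _; rewrite lee_fin.
have dfin : d \is a fin_num by rewrite ge0_fin_numE // (le_lt_trans (hdt 1%R ltr01)) ?ltry.
rewrite -(fineK dfin) lee_fin; apply: le_2sqrt_of_le_add_div => t t0.
by rewrite -lee_fin fineK // hdt.
Qed.
End jensen_shannon.

Theorem lemma2 (R : realType) (A : countType) (p q : A -> R) (eps : R)
  (N : nat) (RN : set (N.-tuple A)) (alpha : R) :
  is_distr p -> is_distr q ->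
  (distJS p q <= eps%:E)%E ->
  (1 <= N)%N ->
  0 < alpha ->
  ((1 - alpha)%:E <= prodN p RN)%E ->
  ((1 - alpha - 2 * (N%:R) ^+ 3 * Num.sqrt (4 * eps * ln 2) - (N%:R)^-1)%:E
     <= prodN q RN)%E.
Proof.
move=> hp hq hd N1 _ hpN.
set s := Num.sqrt (4 * eps * ln 2).
have s0 : 0 <= s by rewrite sqrtr_ge0.
have hTN : ((\esum_(a in [set: A]) `|p a - q a|%:E) *+ N <= (2 * s * N%:R)%:E)%E.
  by rewrite -mule_natr EFinM lee_wpmul2r ?lee_fin // esum_absB_le_sqrt_JS.
have := le_trans hpN (le_trans (prodN_le_add hp hq RN) (leeD2l _ hTN)).
have N3 : 2 * s * N%:R <= 2 * N%:R ^+ 3 * s + N%:R^-1.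
  have n1 : 1 <= N%:R :> R by rewrite ler1n.
  have : 0 <= N%:R^-1 :> R by rewrite invr_ge0.
  have : N%:R <= N%:R ^+ 3 :> R.
    by rewrite exprS ler_peMr ?(le_trans ler01) // exprn_ege1.
  nra.
case: (prodN q RN) => [r| |] //; last by move=> _; rewrite leey.
by rewrite -EFinD !lee_fin; lra.
Qed.
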